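(* Let $G=(V,E)$ be a connected chordal graph on at least three vertices and let $E'$ be a minimum-size $(3,1)$-completion set of $G$. Let $T_i$ and $T_j$ be two distinct trees of $G$ with $|V(T_i)|\ge3$, $|V(T_j)|\ge3$ and $|E'_{i,j}|>0$. Then there is a minimum-size $(3,1)$-completion set $E''$ of $G$ with $|E''_{i,j}|=0$ obtained from $E'$ by replacing the edges of $E'_{i,j}$ with non-edges of $G$ having both endpoints in $V(T_i)$ or both endpoints in $V(T_j)$.
   Context: A graph is chordal if it has no induced cycle of length at least four. A bridge of $G$ is an edge whose removal disconnects $G$. The trees of $G$, denoted $T_1,\dots,T_c$, are the maximal connected subgraphs formed by bridges of $G$ (the non-trivial connected components of the subgraph $(V,\{\text{bridges of }G\})$). A connected graph has a $(3,1)$-cover if each edge lies in a triangle; a set $E'$ of non-edges of $G$ is a $(3,1)$-completion set if $G\cup E'$ has a $(3,1)$-cover. For a completion set $E'$ and $i\neq j$, $E'_{i,j}=\{(u,v)\in E': u\in V(T_i), v\in V(T_j)\}$. *)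

(* A simple graph is a symmetric irreflexive relation e on a finType T;
   its vertex set is all of T. Edges / non-edges are unordered pairs, i.e. 2-element sets. *)
From mathcomp Require Import all_boot.
Set Implicit Arguments. Unset Strict Implicit. Unset Printing Implicit Defensive.

Section Graphs.
Variable T : finType.
Implicit Types (e : rel T) (F : {set {set T}}) (A : {set T}).

Definition simple_graph e := symmetric e /\ irreflexive e.

Definition connected_graph e := forall x y : T, connect e x y.

Definition induced_cycle e (p : seq T) :=
  [/\ uniq p, 3 < size p, cycle e p &
      forall x y, x \in p -> y \in p -> e x y -> (y = next p x) \/ (y = prev p x)].

Definition chordal e := forall p : seq T, ~ induced_cycle e p.

Definition rem_edge e (u v : T) : rel T :=
  [rel x y | e x y && ~~ (((x == u) && (y == v)) || ((x == v) && (y == u)))].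

Definition is_bridge e (u v : T) : bool :=
  e u v && ~~ [forall x, forall y, connect (rem_edge e u v) x y].

Definition bridge_rel e : rel T := [rel x y | is_bridge e x y].

(* A is the vertex set of a tree of G: a non-trivial connected component
   of the spanning subgraph (V, bridges of G). *)
Definition is_tree_of e A :=
  exists r : T, A = [set x | connect (bridge_rel e) r x] /\ 1 < #|A|.

Definition non_edge e (f : {set T}) :=
  exists u v : T, [/\ u != v, ~~ e u v & f = [set u; v]].

Definition add_edges e F : rel T :=
  [rel x y | e x y || ((x != y) && ([set x; y] \in F))].

Definition has_31_cover (h : rel T) :=
  forall x y, h x y -> exists z, h x z && h y z.

Definition completion_set e F :=
  (forall f, f \in F -> non_edge e f) /\ has_31_cover (add_edges e F).

Definition min_completion_set e F :=
  completion_set e F /\ forall F2, completion_set e F2 -> #|F| <= #|F2|.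

Definition cross_edges F A (B : {set T}) : {set {set T}} :=
  [set f in F | [exists u in A, exists v in B, f == [set u; v]]].

End Graphs.

From mathcomp Require Import all_boot zify.
Set Implicit Arguments. Unset Strict Implicit. Unset Printing Implicit Defensive.

(* Let C be the edges of E' between Ti and Tj and D = E' \ C. In a chordal graph an edge lying
   in no triangle is a bridge, so dropping C can only leave bridges of Ti and Tj outside every
   triangle of G + D; call them uncovered. An uncovered bridge ac gets a triangle back from one
   non-edge wc, where aw is another bridge at a (the trees have at least three vertices), and
   the resulting D + F is a (3,1)-completion set with no edge between Ti and Tj. For
   minimality, each uncovered bridge had its triangle in G + E' closed by an apex in the other
   tree, through edges of C or through the at most one edge of G joining Ti and Tj. Replacing the
   uncovered bridges by these cross edges keeps V(Ti) + V(Tj) connected, and comparing with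
   the |Ti| - 1 + |Tj| - 1 bridges of the two trees gives at most |C| uncovered bridges. *)

Lemma eq_set2 (T : finType) (a b c d : T) :
  ([set a; b] == [set c; d]) = ((a == c) && (b == d)) || ((a == d) && (b == c)).
Proof.
apply/eqP/idP => [E | /orP[] /andP[/eqP-> /eqP->] //]; last by rewrite setUC.
have /set2P ha : a \in [set c; d] by rewrite -E set21.
have /set2P hb : b \in [set c; d] by rewrite -E set22.
have /set2P hc : c \in [set a; b] by rewrite E set21.
have /set2P hd : d \in [set a; b] by rewrite E set22.
by case: ha hb hc hd => -> [] -> [] ? [] ?; subst; rewrite ?eqxx ?orbT.
Qed.

Lemma path_exit (T : Type) (P : pred T) (R : rel T) x p :
  P x -> path R x p -> ~~ P (last x p) -> exists u w, [/\ P u, ~~ P w & R u w].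
Proof.
elim: p x => [|y p IH] x Px /=; first by rewrite Px.
case/andP=> Rxy xp last_p; have [Py | nPy] := boolP (P y); first exact: IH Py xp last_p.
by exists x, y.
Qed.

Lemma connect_sub_closed (T : finType) (R Q : rel T) (P : pred T) a b :
  (forall u v, P u -> R u v -> P v /\ Q u v) -> P a -> connect R a b -> connect Q a b.
Proof.
move=> RQ Pa /connectP[p Rp ->]; elim: p a Pa Rp => [|x p IH] a Pa /=; first by rewrite connect0.
case/andP=> /(RQ _ _ Pa)[Px Qax] Rp; exact: connect_trans (connect1 Qax) (IH _ Px Rp).
Qed.

Lemma next_mkseq (T : eqType) (g : nat -> T) n i : {in gtn n &, injective g} -> i < n ->
  next (mkseq g n) (g i) = g (i.+1 %% n).
Proof.
move=> /mkseq_uniqP u lt_in.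
rewrite next_nth -{1 3}(nth_mkseq (g 0) g lt_in) mem_nth ?size_mkseq // index_uniq ?size_mkseq //.
case: n lt_in u => // n lt_in _ /=; rewrite -[iota 1 n]/(iota (0 + 1) n) iotaDl -map_comp.
have [lt_i | ge_i] := ltnP i n.
  by rewrite modn_small ?ltnS // (nth_map 0) ?size_iota // nth_iota.
have -> : i = n by lia.
by rewrite modnn nth_default // size_map size_iota.
Qed.

Lemma induced_cycle_mkseq (T : finType) (e : rel T) (g : nat -> T) n :
  symmetric e -> irreflexive e -> 3 < n -> {in gtn n &, injective g} ->
  (forall i, i.+1 < n -> e (g i) (g i.+1)) -> e (g n.-1) (g 0) ->
  (forall i j, i < j < n -> e (g i) (g j) -> j = i.+1 \/ (i = 0 /\ j = n.-1)) ->
  induced_cycle e (mkseq g n).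
Proof.
move=> e_sym e_irr n_gt3 g_inj e_succ e_last no_chord.
have g_uniq : uniq (mkseq g n) by apply/mkseq_uniqP.
have next_g i : i < n -> next (mkseq g n) (g i) = g (if i.+1 < n then i.+1 else 0).
  move=> lt_in; rewrite next_mkseq //; case: ltnP => [lt_i1n | ge_i1n].
    by rewrite modn_small.
  by rewrite (_ : i.+1 = n) ?modnn //; lia.
have mem_g x : x \in mkseq g n -> exists2 i, i < n & x = g i.
  by case/mapP=> i; rewrite mem_iota add0n => lt_in ->; exists i.
split=> //; first by rewrite size_mkseq.
  apply: (cycle_from_next g_uniq) => _ /mem_g[i lt_in ->]; rewrite next_g //.
  by case: ltnP => [/e_succ // | ge_i1n]; rewrite (_ : i = n.-1) //; lia.
move=> _ _ /mem_g[i lt_in ->] /mem_g[j lt_jn ->].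
wlog lt_ij : i j lt_in lt_jn / i < j => [wlog_lt e_ij | e_ij].
  have [lt_ij | lt_ji | eq_ij] := ltngtP i j; first exact: wlog_lt.
    rewrite e_sym in e_ij; case: (wlog_lt j i) => // ->.
      by right; rewrite prev_next.
    by left; rewrite next_prev.
  by move: e_ij; rewrite eq_ij e_irr.
case: (no_chord i j _ e_ij) => [|ji|[-> ->]]; first by rewrite lt_ij.
  by subst j; left; rewrite next_g ?lt_jn.
have next_last : next (mkseq g n) (g n.-1) = g 0.
  by rewrite next_g ?prednK ?ltnn //; lia.
by right; rewrite -next_last prev_next.
Qed.

Section Distance.
Variables (T : finType) (R : rel T) (r : T).

Fixpoint ball n : {set T} :=
  if n is m.+1 then ball m :|: [set y | [exists x in ball m, R x y]] else [set r].

(* The distance of a vertex not reachable from [r] is the junk value [#|T|.+1]. *)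
Definition dist v := find (fun n => v \in ball n) (iota 0 #|T|.+1).

Lemma ball_mono m n : m <= n -> ball m \subset ball n.
Proof.
move=> /subnK <-; elim: (n - m) => [|k IH] //=.
exact: subset_trans IH (subsetUl _ _).
Qed.

Lemma ball_connect n v : v \in ball n -> connect R r v.
Proof.
elim: n v => [|n IH] v /=; first by move/set1P->.
case/setUP; first exact: IH.
by rewrite inE => /existsP[x /andP[/IH rx Rxv]]; apply: connect_trans rx (connect1 Rxv).
Qed.

Lemma path_last_ball p : path R r p -> last r p \in ball (size p).
Proof.
elim/last_ind: p => [|p x IH] /=; first by rewrite set11.
rewrite rcons_path last_rcons size_rcons => /andP[/IH rp Rx] /=.
by apply/setUP; right; rewrite inE; apply/existsP; exists (last r p); rewrite rp.
Qed.

Lemma connect_ball v : connect R r v -> v \in ball #|T|.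
Proof.
case/connectP=> p /shortenP[q rq uq _] ->.
have size_q : size q < #|T| by have := max_card (mem (r :: q)); rewrite (card_uniqP uq).
exact: subsetP (ball_mono (ltnW size_q)) _ (path_last_ball rq).
Qed.

Lemma dist_le n v : v \in ball n -> dist v <= n.
Proof.
move=> vn; case: (leqP n #|T|) => [n_le | /ltnW lt_n].
  rewrite leqNgt; apply/negP => /(before_find 0).
  by rewrite nth_iota ?add0n ?vn // ltnS.
apply: leq_trans lt_n; rewrite -ltnS -[X in _ < X](size_iota 0) -has_find.
apply/hasP; exists #|T|; first by rewrite mem_iota add0n ltnSn.
exact: connect_ball (ball_connect vn).
Qed.

Lemma mem_ball_dist v : connect R r v -> v \in ball (dist v).
Proof.
move/connect_ball=> vT.
have has_v : has (fun n => v \in ball n) (iota 0 #|T|.+1).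
  by apply/hasP; exists #|T|; rewrite ?mem_iota ?add0n ?ltnSn.
have := nth_find 0 has_v; rewrite nth_iota ?add0n //.
by rewrite -[X in _ < X](size_iota 0) -has_find.
Qed.

Lemma dist_eq0 v : (dist v == 0) = (v == r).
Proof. by rewrite /dist /=; case: ifP; rewrite inE => ->. Qed.

Lemma dist_step u v : connect R r u -> R u v -> dist v <= (dist u).+1.
Proof.
move=> ru Ruv; apply: dist_le => /=; apply/setUP; right; rewrite inE.
by apply/existsP; exists u; rewrite mem_ball_dist.
Qed.

Lemma exists_parent v : connect R r v -> v != r ->
  exists u, [&& R u v, (dist u).+1 == dist v & connect R r u].
Proof.
rewrite -dist_eq0 => rv; have := mem_ball_dist rv.
case dv: (dist v) => [|m] //= /setUP[/dist_le | ]; first by rewrite dv ltnn.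
rewrite inE => /existsP[u /andP[um Ruv]] _.
have ru := ball_connect um.
exists u; rewrite Ruv ru andbT eqn_leq ltnS (dist_le um) /= -dv.
exact: dist_step ru Ruv.
Qed.

Definition parent v := odflt v [pick u | [&& R u v, (dist u).+1 == dist v & connect R r u]].

Lemma parentP v : connect R r v -> v != r ->
  [/\ R (parent v) v, (dist (parent v)).+1 = dist v & connect R r (parent v)].
Proof.
move=> rv vr; rewrite /parent; case: pickP => [u /and3P[? /eqP ? ?] // | none].
by have [u] := exists_parent rv vr; rewrite none.
Qed.

Lemma parent_chain v i : connect R r v -> i <= dist v ->
  connect R r (iter i parent v) /\ dist (iter i parent v) = dist v - i.
Proof.
move=> rv; elim: i => [|i IH] lti; first by rewrite subn0.
have [ri di] := IH (ltnW lti).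
have ir : iter i parent v != r by rewrite -dist_eq0 di; lia.
by have [_ dp rp] := parentP ri ir; rewrite iterS; split=> //; lia.
Qed.

Lemma parent_edge_neq v a : connect R r v -> v != r -> connect R r a -> a != r ->
  dist a < dist v -> [set a; parent a] != [set parent v; v].
Proof.
move=> rv vr ra ar lt_av; have [_ d_v _] := parentP rv vr; have [_ d_a _] := parentP ra ar.
rewrite eq_set2; apply/negP => /orP[] /andP[/eqP a_ /eqP p_a]; move: lt_av d_a.
  by rewrite p_a a_; lia.
by rewrite a_ ltnn.
Qed.

Lemma connect_to_root (Q : rel T) m :
  (forall v, connect R r v -> v != r -> dist v <= m -> Q v (parent v)) ->
  forall v, connect R r v -> dist v <= m -> connect Q v r.
Proof.
move=> Qpar; elim: m Qpar => [|m IH] Qpar v rv vm.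
  by move: vm; rewrite leqn0 dist_eq0 => /eqP->.
have [-> | vr] := eqVneq v r; first exact: connect0.
have [_ dp rp] := parentP rv vr.
apply: connect_trans (connect1 (Qpar v rv vr vm)) (IH _ _ rp _) => [w rw wr wm|].
  by apply: Qpar; rewrite ?(leq_trans wm).
lia.
Qed.

End Distance.

Lemma connected_card_le (T : finType) (R : rel T) r (V : {set T}) (S : {set {set T}}) :
  r \in V -> {in V, forall v, connect R r v} ->
  (forall u v, v \in V -> R u v -> [set u; v] \in S) -> #|V| <= #|S|.+1.
Proof.
move=> rV rVc RS; rewrite (cardsD1 r V) rV ltnS.
pose link v := [set v; parent R r v].
have link_inj : {in V :\ r &, injective link}.
  move=> v w /setD1P[vr vV] /setD1P[wr wV] /eqP.
  have [_ dv _] := parentP (rVc v vV) vr; have [_ dw _] := parentP (rVc w wV) wr.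
  rewrite eq_set2 => /orP[/andP[/eqP // _] | /andP[/eqP vw /eqP wv]].
by move: dv dw; rewrite -vw wv; lia.
rewrite -(card_in_imset link_inj); apply/subset_leq_card/subsetP => _ /imsetP[v /setD1P[vr vV] ->].
have [Rpv _ _] := parentP (rVc v vV) vr.
by rewrite /link setUC; apply: RS.
Qed.

Section Bridges.
Variables (T : finType) (e : rel T).
Hypotheses (e_sym : symmetric e) (e_irr : irreflexive e) (e_conn : connected_graph e).
Implicit Types (F : {set {set T}}) (A B : {set T}).

Lemma edge_neq x y : e x y -> x != y.
Proof. by apply: contraTneq => ->; rewrite e_irr. Qed.

Lemma rem_edgeE u v x y : rem_edge e u v x y = e x y && ([set x; y] != [set u; v]).
Proof. by rewrite /rem_edge /= eq_set2. Qed.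

Lemma rem_edge_sym u v : symmetric (rem_edge e u v).
Proof. by move=> x y; rewrite !rem_edgeE e_sym setUC. Qed.

Lemma is_bridge_sym x y : is_bridge e x y = is_bridge e y x.
Proof.
rewrite /is_bridge e_sym; congr (_ && ~~ _); apply: eq_forallb => a; apply: eq_forallb => b.
by apply: eq_connect => u w; rewrite !rem_edgeE [[set y; x]]setUC.
Qed.

Lemma bridge_edge x y : is_bridge e x y -> e x y.
Proof. by case/andP. Qed.

Lemma bridge_disconnects x y : is_bridge e x y -> ~~ connect (rem_edge e x y) x y.
Proof.
case/andP=> _ /forallPn[a /forallPn[b /negP not_ab]]; apply: contra_notN not_ab => xy.
apply: connect_sub _ _ (e_conn a b) => u w e_uw.
have [uw_xy | uw_xy] := eqVneq [set u; w] [set x; y].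
  move/eqP: uw_xy; rewrite eq_set2 => /orP[] /andP[/eqP-> /eqP->] //.
  by rewrite (sym_connect_sym (@rem_edge_sym x y)).
by apply: connect1; rewrite rem_edgeE e_uw.
Qed.

Lemma bridge_no_triangle x y z : is_bridge e x y -> e x z -> e y z -> False.
Proof.
move=> b_xy e_xz e_yz; apply: (negP (bridge_disconnects b_xy)).
have z_x : z != x by rewrite eq_sym edge_neq.
have z_y : z != y by rewrite eq_sym edge_neq.
have x_y : x != y by rewrite edge_neq ?bridge_edge.
apply: (@connect_trans _ _ z); apply: connect1; rewrite rem_edgeE ?e_xz 1?e_sym ?e_yz eq_set2.
  by rewrite (negbTE z_y) (negbTE x_y) !andbF.
by rewrite (negbTE z_y) (negbTE z_x).
Qed.

Definition untriangled (h : rel T) x y := h x y && ~~ [exists z, h x z && h y z].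

Lemma chordal_bridge x y : chordal e -> untriangled e x y -> is_bridge e x y.
Proof.
(* Otherwise a shortest path from [y] to [x] in [G - xy] closes with [xy] into an induced
   cycle, of length at least four since [xy] lies in no triangle. *)
move=> chordal_e /andP[e_xy no_tri]; rewrite /is_bridge e_xy /=.
apply/negP=> /forallP/(_ y)/forallP/(_ x) yx.
set Q := rem_edge e x y; set k := dist Q y x; pose g i := iter i (parent Q y) x.
have g_chain i : i <= k -> connect Q y (g i) /\ dist Q y (g i) = k - i := parent_chain yx.
have g_k : g k = y.
  by have [_ dk] := g_chain k (leqnn k); apply/eqP; rewrite -(dist_eq0 Q) dk subnn.
have g_step i : i < k -> Q (g i.+1) (g i).
  move=> lt_ik; have [yi di] := g_chain i (ltnW lt_ik).
  have gi_y : g i != y by rewrite -(dist_eq0 Q) di; lia.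
  by have [] := parentP yi gi_y.
have g_inj : {in gtn k.+1 &, injective g}.
  move=> i j; rewrite !inE => lt_ik lt_jk g_ij.
  have [_ di] := g_chain i lt_ik; have [_ dj] := g_chain j lt_jk; move: di; rewrite g_ij dj; lia.
have Q_e u v : Q u v -> e u v by case/andP.
have k_gt2 : 2 < k.
  have k_gt0 : 0 < k by rewrite lt0n /k (dist_eq0 Q) edge_neq.
  have k_neq1 : k != 1.
    apply/eqP => k1; have := g_step 0 k_gt0.
    by rewrite /Q rem_edgeE -k1 g_k /= [[set y; x]]setUC eqxx andbF.
  rewrite ltnNge; apply: (contra _ no_tri) => k_le2; apply/existsP; exists (g 1).
  have k2 : k = 2 by lia.
  by rewrite e_sym (Q_e _ _ (g_step 0 k_gt0)) -[y]g_k k2; apply/Q_e/g_step; rewrite k2.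
apply: (chordal_e (mkseq g k.+1)); apply: induced_cycle_mkseq => //=.
- by move=> i lt_ik; rewrite e_sym Q_e // g_step.
- by rewrite g_k e_sym.
move=> i j /andP[lt_ij lt_jk] e_ij.
have [_ di] := g_chain i (ltnW (leq_trans lt_ij lt_jk)); have [yj dj] := g_chain j lt_jk.
have [xy_ij | xy_ij] := eqVneq [set g i; g j] [set x; y].
  have dy : dist Q y y = 0 by apply/eqP; rewrite dist_eq0.
  move/eqP: xy_ij; rewrite eq_set2 => /orP[] /andP[/eqP gi /eqP gj];
    by move: di dj; rewrite gi gj dy -/k; lia.
have Q_ji : Q (g j) (g i) by rewrite /Q rem_edge_sym rem_edgeE e_ij.
by have := dist_step yj Q_ji; rewrite di dj; lia.
Qed.

Lemma bridge_rel_sym : symmetric (bridge_rel e).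
Proof. by move=> x y; rewrite /bridge_rel /= is_bridge_sym. Qed.

Lemma tree_memE A x y : is_tree_of e A -> x \in A -> (y \in A) = connect (bridge_rel e) x y.
Proof.
case=> r [-> _]; rewrite !inE => rx.
by rewrite (same_connect (sym_connect_sym bridge_rel_sym) rx).
Qed.

Lemma tree_connect A x y : is_tree_of e A -> x \in A -> y \in A -> connect (bridge_rel e) x y.
Proof. by move=> tA xA; rewrite (tree_memE _ tA xA). Qed.

Lemma tree_bridge_mem A x y : is_tree_of e A -> is_bridge e x y -> (x \in A) = (y \in A).
Proof.
move=> tA b_xy; apply/idP/idP => [xA | yA].
  by rewrite (tree_memE _ tA xA) connect1.
by rewrite (tree_memE _ tA yA) connect1 // bridge_rel_sym.
Qed.

Lemma trees_disjoint A B : is_tree_of e A -> is_tree_of e B -> A != B -> [disjoint A & B].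
Proof.
move=> tA tB /eqP nAB; rewrite disjoint_subset; apply/subsetP => x xA; rewrite inE.
apply/negP => xB; apply: nAB; apply/setP => y.
by rewrite (tree_memE _ tA xA) (tree_memE _ tB xB).
Qed.

Lemma connect_root_avoiding r x y m :
  (forall a, connect (bridge_rel e) r a -> a != r -> dist (bridge_rel e) r a <= m ->
     [set a; parent (bridge_rel e) r a] != [set x; y]) ->
  forall a, connect (bridge_rel e) r a -> dist (bridge_rel e) r a <= m ->
    connect (rem_edge e x y) a r.
Proof.
move=> avoid_xy; apply: connect_to_root => a ra ar am.
have [b_a _ _] := parentP ra ar.
by rewrite rem_edgeE e_sym (bridge_edge b_a) avoid_xy.
Qed.

Lemma bridge_parent r u v : connect (bridge_rel e) r u -> connect (bridge_rel e) r v ->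
  is_bridge e u v -> dist (bridge_rel e) r u <= dist (bridge_rel e) r v ->
  v != r /\ parent (bridge_rel e) r v = u.
Proof.
set d := dist (bridge_rel e) r; move=> ru rv b_uv le_uv.
have v_r : v != r.
  apply: contraNneq (edge_neq (bridge_edge b_uv)) => vr.
  have d_r : d r = 0 by apply/eqP; rewrite dist_eq0.
  by move: le_uv; rewrite vr d_r leqn0 /d dist_eq0.
split=> //; apply/eqP; apply: (contraNT _ (bridge_disconnects b_uv)) => par_v.
have avoid_uv w : connect (bridge_rel e) r w -> w != r -> d w <= d v ->
    [set w; parent (bridge_rel e) r w] != [set u; v].
  move=> rw wr le_wv; have [_ d_w _] := parentP rw wr.
  rewrite eq_set2; apply/negP => /orP[] /andP[/eqP w_ /eqP p_w].
    by move: le_uv le_wv d_w; rewrite -/d p_w w_; lia.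
  by move: par_v; rewrite -w_ p_w eqxx.
apply: connect_trans (connect_root_avoiding avoid_uv ru le_uv) _.
by rewrite (sym_connect_sym (@rem_edge_sym u v)) (connect_root_avoiding avoid_uv rv).
Qed.

Definition tree_edges A : {set {set T}} := [set [set x; y] | x in A, y in A & is_bridge e x y].

Lemma card_tree_edges A : is_tree_of e A -> #|tree_edges A| < #|A|.
Proof.
move=> tA; have [r [defA _]] := tA; have rA : r \in A by rewrite defA inE connect0.
rewrite (cardsD1 r A) rA add1n ltnS.
pose link v := [set v; parent (bridge_rel e) r v].
apply: (leq_trans _ (leq_imset_card link (A :\ r))); apply/subset_leq_card/subsetP.
move=> _ /imset2P[x y xA /[!inE] /andP[yA b_xy] ->].
have rx : connect (bridge_rel e) r x by rewrite -(tree_memE _ tA rA).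
have ry : connect (bridge_rel e) r y by rewrite -(tree_memE _ tA rA).
have [le_xy | /ltnW le_yx] := leqP (dist (bridge_rel e) r x) (dist (bridge_rel e) r y).
  have [y_r <-] := bridge_parent rx ry b_xy le_xy.
  by rewrite setUC; apply: imset_f; rewrite !inE y_r.
have [x_r <-] := bridge_parent ry rx (etrans (is_bridge_sym _ _) b_xy) le_yx.
by apply: imset_f; rewrite !inE x_r.
Qed.

Lemma tree_link_unique A B u1 u2 v1 v2 : is_tree_of e A -> is_tree_of e B -> A != B ->
  u1 \in A -> u2 \in A -> v1 \in B -> v2 \in B -> e u1 v1 -> e u2 v2 -> u1 = u2.
Proof.
move=> tA tB nAB u1A u2A v1B v2B e1 e2; apply/eqP/negPn/negP => u12.
have u1u2 := tree_connect tA u1A u2A; have u2_u1 : u2 != u1 by rewrite eq_sym.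
have [b_w d_w u1w] := parentP u1u2 u2_u1; set w := parent _ u1 u2 in b_w d_w u1w *.
have w_u1 : connect (rem_edge e w u2) w u1.
  apply: (connect_root_avoiding (m := dist (bridge_rel e) u1 w)) => // a u1a a_u1 le_aw.
  by apply: parent_edge_neq; rewrite // -d_w ltnS.
have wA : w \in A by rewrite (tree_bridge_mem tA b_w).
have outA z : z \in B -> z \notin A by move/(disjointFl (trees_disjoint tA tB nAB))->.
have avoid z z' : z \in B -> e z z' -> rem_edge e w u2 z z'.
  move=> /outA zA e_zz'; rewrite rem_edgeE e_zz' eq_set2.
  by apply: contra zA => /orP[] /andP[/eqP-> _].
have v1_v2 : connect (rem_edge e w u2) v1 v2.
  apply: (connect_sub_closed (P := fun z => z \in B)) (tree_connect tB v1B v2B) => // z z' zB b_zz'.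
  by rewrite -(tree_bridge_mem tB b_zz') zB avoid // bridge_edge.
apply: (negP (bridge_disconnects b_w)).
apply: connect_trans w_u1 (connect_trans (connect1 _) (connect_trans v1_v2 (connect1 _))).
- by rewrite rem_edge_sym avoid // e_sym.
- by rewrite avoid // e_sym.
Qed.

Lemma tree_bridge_extends A x y : is_tree_of e A -> 2 < #|A| -> x \in A -> is_bridge e x y ->
  exists w, (is_bridge e x w && (w != y)) || (is_bridge e y w && (w != x)).
Proof.
move=> tA A_gt2 xA b_xy.
have [t] : exists t, t \in A :\: [set x; y].
  apply/set0Pn; rewrite -card_gt0 cardsD.
  by have := subset_leq_card (subsetIr A [set x; y]); rewrite cards2; lia.
rewrite !inE negb_or => /andP[/andP[t_x t_y] tA'].
have /connectP[p xp t_last] := tree_connect tA xA tA'.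
have t_out : ~~ mem [set x; y] (last x p) by rewrite -t_last !inE negb_or t_x.
have [u [w [u_xy w_xy b_uw]]] := path_exit (P := mem [set x; y]) (set21 x y) xp t_out.
rewrite /bridge_rel /= in b_uw; exists w.
move: u_xy w_xy; rewrite !inE negb_or => /orP[] /eqP u_ /andP[w_x w_y].
  by rewrite -u_ b_uw w_y.
by rewrite -u_ b_uw w_x orbT.
Qed.

Lemma add_edges_sym F : symmetric (add_edges e F).
Proof. by move=> x y; rewrite /add_edges /= e_sym eq_sym setUC. Qed.

Lemma add_edges_mono F1 F2 x y : F1 \subset F2 -> add_edges e F1 x y -> add_edges e F2 x y.
Proof.
by move=> /subsetP F12; rewrite /add_edges /= => /orP[-> // | /andP[-> /F12->]]; rewrite orbT.
Qed.

Lemma untriangled_sym (h : rel T) x y : symmetric h -> untriangled h x y = untriangled h y x.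
Proof.
move=> h_sym; rewrite /untriangled h_sym; congr (_ && ~~ _).
by apply: eq_existsb => z; rewrite andbC.
Qed.

Lemma pair_covered (h : rel T) a b c x y : h a c -> h b c ->
  [set x; y] = [set a; b] -> exists z, h x z && h y z.
Proof.
move=> h_ac h_bc /eqP; rewrite eq_set2 => /orP[] /andP[/eqP-> /eqP->].
  by exists c; rewrite h_ac h_bc.
by exists c; rewrite h_ac h_bc.
Qed.

Definition supports_triangle F f := [exists x, exists y, exists z,
  [&& untriangled e x y, add_edges e F x z, add_edges e F y z &
      (f == [set x; z]) || (f == [set y; z])]].

Lemma supporting_completion F : completion_set e F ->
  completion_set e [set f in F | supports_triangle F f].
Proof.
case=> non_edges cover; set F1 := [set f in F | _].
have lift u v : supports_triangle F [set u; v] -> add_edges e F u v -> add_edges e F1 u v.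
  by move=> supp; rewrite /add_edges /= inE => /orP[-> // | /andP[-> ->]]; rewrite supp orbT.
have supports x y z : untriangled e x y -> add_edges e F x z -> add_edges e F y z ->
    supports_triangle F [set x; z] /\ supports_triangle F [set y; z].
  by move=> u_xy h_xz h_yz; split; apply/existsP; exists x; apply/existsP; exists y;
    apply/existsP; exists z; rewrite u_xy h_xz h_yz eqxx ?orbT.
split=> [f | x y]; first by rewrite inE => /andP[/non_edges].
rewrite {1}/add_edges /= => /orP[e_xy | /andP[x_y]].
  have [/existsP[z /andP[e_xz e_yz]] | no_tri] := boolP [exists z, e x z && e y z].
    by exists z; rewrite /add_edges /= e_xz e_yz.
  have u_xy : untriangled e x y by rewrite /untriangled e_xy no_tri.
  have [z /andP[h_xz h_yz]] : exists z, add_edges e F x z && add_edges e F y z.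
    by apply: cover; rewrite /add_edges /= e_xy.
  by have [s_xz s_yz] := supports _ _ _ u_xy h_xz h_yz; exists z; rewrite !lift.
rewrite inE => /andP[_ /existsP[a /existsP[b /existsP[c /and4P[u_ab h_ac h_bc f_]]]]].
have [s_ac s_bc] := supports _ _ _ u_ab h_ac h_bc.
have h1_ac := lift _ _ s_ac h_ac; have h1_bc := lift _ _ s_bc h_bc.
have e_ab : add_edges e F1 a b by rewrite /add_edges /= (andP u_ab).1.
case/orP: f_ => /eqP f_.
  by apply: (pair_covered e_ab _ f_); rewrite add_edges_sym.
by apply: (pair_covered (c := a)) f_; rewrite add_edges_sym.
Qed.

Lemma min_completion_supports F : min_completion_set e F -> {in F, forall f, supports_triangle F f}.
Proof.
case=> cF minF f fF; set F1 := [set f in F | supports_triangle F f].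
have F1_F : F1 \subset F by apply/subsetP => g; rewrite inE => /andP[].
have /eqP F1E : F1 == F by rewrite eqEcard F1_F minF //; apply: supporting_completion.
have : f \in F1 by rewrite F1E.
by rewrite inE => /andP[].
Qed.

Section Exchange.
Variables (E : {set {set T}}) (Ti Tj : {set T}).
Hypotheses (e_chordal : chordal e) (E_min : min_completion_set e E)
  (tI : is_tree_of e Ti) (tJ : is_tree_of e Tj) (Ti_Tj : Ti != Tj)
  (Ti_big : 2 < #|Ti|) (Tj_big : 2 < #|Tj|).

Definition cross x y := ((x \in Ti) && (y \in Tj)) || ((x \in Tj) && (y \in Ti)).

Lemma cross_bridge x x' z : is_bridge e x x' -> cross x z = cross x' z.
Proof. by move=> b; rewrite /cross (tree_bridge_mem tI b) (tree_bridge_mem tJ b). Qed.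

Lemma not_cross_tree x y : ((x \in Ti) && (y \in Ti)) || ((x \in Tj) && (y \in Tj)) -> ~~ cross x y.
Proof.
have dIJ := trees_disjoint tI tJ Ti_Tj.
by case/orP=> /andP[xT yT]; rewrite /cross ?(disjointFr dIJ xT) ?(disjointFr dIJ yT)
  ?(disjointFl dIJ xT) ?(disjointFl dIJ yT) ?andbF.
Qed.

Lemma mem_cross_edges F x y :
  ([set x; y] \in cross_edges F Ti Tj) = ([set x; y] \in F) && cross x y.
Proof.
rewrite inE; congr (_ && _); apply/existsP/idP => [[u /andP[uI /existsP[v /andP[vJ]]]] | ].
  by rewrite eq_set2 => /orP[] /andP[/eqP-> /eqP->]; rewrite /cross uI vJ ?orbT.
by case/orP=> /andP[xT yT]; [exists x | exists y]; rewrite ?xT ?yT /=; apply/existsP;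
  [exists y | exists x]; rewrite ?xT ?yT //= eq_set2 !eqxx ?orbT.
Qed.

Lemma cross_edges_pair F f : f \in cross_edges F Ti Tj ->
  exists x y, [/\ f = [set x; y], x \in Ti & y \in Tj].
Proof.
by rewrite inE => /andP[_ /existsP[x /andP[xI /existsP[y /andP[yJ /eqP->]]]]]; exists x, y.
Qed.

Let C := cross_edges E Ti Tj.
Let D := E :\: C.

Lemma lost_edge_cross x z : add_edges e E x z -> ~~ add_edges e D x z -> cross x z.
Proof.
rewrite /add_edges /= => /orP[-> // | /andP[-> xzE]].
by rewrite /= negb_or inE xzE andbT negbK mem_cross_edges xzE => /andP[].
Qed.

Definition graph_links := [set [set u; v] | u in Ti, v in Tj & e u v].
Definition links := C :|: graph_links.

Lemma cross_link y z : cross y z -> add_edges e E y z -> [set y; z] \in links.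
Proof.
move=> c_yz; rewrite /add_edges /= => /orP[e_yz | /andP[_ yzE]]; last first.
  by rewrite inE mem_cross_edges yzE c_yz.
apply/setUP; right; case/orP: c_yz => /andP[yT zT].
  by apply/imset2P; exists y z; rewrite ?inE ?zT.
by rewrite setUC; apply/imset2P; exists z y; rewrite ?inE ?yT // e_sym.
Qed.

Lemma apex x y : is_bridge e x y -> untriangled (add_edges e D) x y ->
  exists z, [/\ cross x z, [set x; z] \in links & [set y; z] \in links].
Proof.
move=> b_xy /andP[_ no_tri]; case: E_min => [[_ cover] _].
have [z /andP[h_xz h_yz]] : exists z, add_edges e E x z && add_edges e E y z.
  by apply: cover; rewrite /add_edges /= bridge_edge.
have c_xz : cross x z.
  have [hD_xz | /(lost_edge_cross h_xz) //] := boolP (add_edges e D x z).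
  have [hD_yz | /(lost_edge_cross h_yz)] := boolP (add_edges e D y z).
    by case/existsP: no_tri; exists z; rewrite hD_xz hD_yz.
  by rewrite (cross_bridge _ b_xy).
by exists z; rewrite !cross_link // -(cross_bridge _ b_xy).
Qed.

Definition uncovered :=
  [set [set x; y] | x : T, y : T in [set y | is_bridge e x y && untriangled (add_edges e D) x y]].

Lemma uncovered_pair b : b \in uncovered ->
  exists x y, [/\ b = [set x; y], is_bridge e x y & untriangled (add_edges e D) x y].
Proof. by case/imset2P=> x y _; rewrite inE => /andP[b_xy u_xy] ->; exists x, y. Qed.

Lemma uncovered_mem b u : b \in uncovered -> u \in b -> (u \in Ti) || (u \in Tj).
Proof.
case/uncovered_pair=> x [y [-> b_xy u_xy]] /set2P[] ->.
  by have [z [/orP[] /andP[-> _] _ _]] := apex b_xy u_xy; rewrite ?orbT.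
rewrite is_bridge_sym untriangled_sym in b_xy u_xy; last exact: add_edges_sym.
by have [z [/orP[] /andP[-> _] _ _]] := apex b_xy u_xy; rewrite ?orbT.
Qed.

Definition repair_spec b (q : T * T * T) :=
  let: (a, c, w) := q in [&& b == [set a; c], is_bridge e a c, is_bridge e a w & w != c].

(* The uncovered bridge [b = {a, c}] gets back the triangle [a c w] through the non-edge [wc],
   where [aw] is another bridge at [a]; the fallback value [b] is never reached. *)
Definition repair b := if [pick q | repair_spec b q] is Some (a, c, w) then [set w; c] else b.

Lemma uncovered_repair b : b \in uncovered -> exists a c w,
  [/\ b = [set a; c], is_bridge e a c, is_bridge e a w, w != c & repair b = [set w; c]].
Proof.
move=> bU; rewrite /repair; case: pickP => [[[a c] w] /and4P[/eqP-> b_ac b_aw w_c] | none].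
  by exists a, c, w.
have [x [y [b_ b_xy _]]] := uncovered_pair bU.
have [A [tA A_gt2 xA]] : exists A, [/\ is_tree_of e A, 2 < #|A| & x \in A].
  have xb : x \in b by rewrite b_ set21.
  by case/orP: (uncovered_mem bU xb) => xT; [exists Ti | exists Tj].
have [w /orP[] /andP[b_w w_]] := tree_bridge_extends tA A_gt2 xA b_xy.
  by have := none (x, y, w); rewrite /= b_ eqxx b_xy b_w w_.
by have := none (y, x, w); rewrite /= b_ setUC eqxx is_bridge_sym b_xy b_w w_.
Qed.

Definition repairs := repair @: uncovered.

Definition E'' := D :|: repairs.

Lemma repairs_spec f : f \in repairs -> exists u v, [/\ u != v, ~~ e u v, f = [set u; v] &
  ((u \in Ti) && (v \in Ti)) || ((u \in Tj) && (v \in Tj))].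
Proof.
case/imsetP=> b bU ->; have [a [c [w [b_ b_ac b_aw w_c ->]]]] := uncovered_repair bU.
exists w, c; split=> //.
  by apply/negP => e_wc; apply: bridge_no_triangle b_aw (bridge_edge b_ac) e_wc.
have cb : c \in b by rewrite b_ set22.
have same_tree A : is_tree_of e A -> (w \in A) = (c \in A).
  by move=> tA; rewrite -(tree_bridge_mem tA b_aw) (tree_bridge_mem tA b_ac).
by rewrite !same_tree //; case/orP: (uncovered_mem bU cb) => ->; rewrite ?orbT.
Qed.

Lemma uncovered_sub : uncovered \subset tree_edges Ti :|: tree_edges Tj.
Proof.
apply/subsetP => b bU; have [x [y [b_ b_xy _]]] := uncovered_pair bU.
have xb : x \in b by rewrite b_ set21.
have tree_edge A : is_tree_of e A -> x \in A -> b \in tree_edges A.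
  move=> tA xA; rewrite b_; apply/imset2P; exists x y => //.
  by rewrite inE -(tree_bridge_mem tA b_xy) xA.
by apply/setUP; case/orP: (uncovered_mem bU xb) => xT; [left | right]; apply: tree_edge.
Qed.

Lemma card_graph_links : #|graph_links| <= 1.
Proof.
apply/card_le1_eqP => f g /imset2P[u1 v1 u1I /[!inE] /andP[v1J e1] ->].
case/imset2P=> u2 v2 u2I /[!inE] /andP[v2J e2] ->.
have J_I : Tj != Ti by rewrite eq_sym.
rewrite (tree_link_unique tI tJ Ti_Tj u1I u2I v1J v2J e1 e2).
by rewrite (tree_link_unique tJ tI J_I v1J v2J u1I u2I) // e_sym.
Qed.

(* Swapping every uncovered bridge for the two cross sides of its old triangle keeps
   [Ti :|: Tj] connected. *)
Definition rewired := [rel u v | (is_bridge e u v && ([set u; v] \notin uncovered)) ||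
                                 ([set u; v] \in links)].

Lemma connect_rewired_bridge a b : is_bridge e a b -> connect rewired a b.
Proof.
move=> b_ab; have [abU | abU] := boolP ([set a; b] \in uncovered); last first.
  by apply: connect1; rewrite /= b_ab abU.
have [x [y [ab_ b_xy u_xy]]] := uncovered_pair abU; have [z [_ xz yz]] := apex b_xy u_xy.
have xy : connect rewired x y.
  apply: (@connect_trans _ _ z); apply: connect1; rewrite /= ?xz ?orbT //.
  by rewrite [[set z; y]]setUC yz orbT.
have rewired_sym : connect_sym rewired.
  by apply: sym_connect_sym => u v; rewrite /= is_bridge_sym [[set v; u]]setUC.
by move/eqP: ab_; rewrite eq_set2 => /orP[] /andP[/eqP-> /eqP->]; rewrite // rewired_sym.
Qed.

Lemma card_uncovered : 0 < #|C| -> #|uncovered| <= #|C|.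
Proof.
case/card_gt0P => f fC; have [p [q [f_ pI qJ]]] := cross_edges_pair fC.
have pqC : [set p; q] \in C by rewrite -f_.
have connect_V v : v \in Ti :|: Tj -> connect rewired p v.
  have bridges_rewired := connect_sub connect_rewired_bridge.
  case/setUP => [vI | vJ]; first exact: bridges_rewired (tree_connect tI pI vI).
  have pq : rewired p q by rewrite /= inE pqC orbT.
  apply: (@connect_trans _ _ q); first exact: connect1.
  exact: bridges_rewired (tree_connect tJ qJ vJ).
have pV : p \in Ti :|: Tj by rewrite inE pI.
set TE := tree_edges Ti :|: tree_edges Tj.
have edges_S u v : v \in Ti :|: Tj -> rewired u v -> [set u; v] \in (TE :\: uncovered) :|: links.
  move=> vV /orP[/andP[b_uv uvU] | uvK]; last by rewrite inE uvK orbT.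
  have tree_edge A : is_tree_of e A -> v \in A -> [set u; v] \in tree_edges A.
    move=> tA vA; have uA : u \in A by rewrite (tree_bridge_mem tA b_uv).
    by apply/imset2P; exists u v; rewrite // inE vA.
  rewrite !inE uvU /=.
  by case/setUP: vV => [/(tree_edge _ tI) | /(tree_edge _ tJ)] ->; rewrite ?orbT.
have card_V : #|Ti :|: Tj| = #|Ti| + #|Tj|.
  by apply/eqP; rewrite (leq_card_setU Ti Tj).2 trees_disjoint.
have card_TE : #|uncovered| + #|TE :\: uncovered| = #|TE|.
  by rewrite -{1}(setIidPr uncovered_sub) cardsID.
have le_V : #|Ti| + #|Tj| <= #|(TE :\: uncovered) :|: links|.+1.
  by rewrite -card_V; apply: connected_card_le pV connect_V edges_S.
have le_S : #|(TE :\: uncovered) :|: links| <= #|TE :\: uncovered| + #|links|.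
  exact: (leq_card_setU _ _).1.
have le_TE : #|TE| <= #|tree_edges Ti| + #|tree_edges Tj| := (leq_card_setU _ _).1.
have le_links : #|links| <= #|C| + #|graph_links| := (leq_card_setU _ _).1.
have := card_graph_links; have := card_tree_edges tI; have := card_tree_edges tJ.
lia.
Qed.

Lemma card_E'' : 0 < #|C| -> #|E''| <= #|E|.
Proof.
move=> C_gt0; have C_E : C \subset E by apply/subsetP => f; rewrite inE => /andP[].
have card_E : #|C| + #|D| = #|E| by rewrite -{1}(setIidPr C_E) cardsID.
have le_E'' : #|E''| <= #|D| + #|repairs| := (leq_card_setU _ _).1.
have le_repairs : #|repairs| <= #|uncovered| := leq_imset_card _ _.
have := card_uncovered C_gt0; lia.
Qed.

Lemma cover_graph_edge x y : e x y -> exists z, add_edges e E'' x z && add_edges e E'' y z.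
Proof.
move=> e_xy; have [/existsP[z /andP[e_xz e_yz]] | no_tri] := boolP [exists z, e x z && e y z].
  by exists z; rewrite /add_edges /= e_xz e_yz.
have b_xy : is_bridge e x y by apply: (chordal_bridge e_chordal); rewrite /untriangled e_xy.
have [/existsP[z /andP[h_xz h_yz]] | no_triD] :=
  boolP [exists z, add_edges e D x z && add_edges e D y z].
  by exists z; rewrite !(add_edges_mono (subsetUl D repairs)).
have xyU : [set x; y] \in uncovered.
  by apply/imset2P; exists x y; rewrite // inE b_xy /untriangled no_triD /add_edges /= e_xy.
have [a [c [w [xy_ b_ac b_aw w_c rep]]]] := uncovered_repair xyU.
apply: (pair_covered (c := w) _ _ xy_).
  by rewrite /add_edges /= bridge_edge.
rewrite /add_edges /= eq_sym w_c /E'' inE setUC -rep.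
by apply/orP; right; apply/orP; right; apply: imset_f.
Qed.

Lemma kept_triangle_side a b c : untriangled e a b -> add_edges e E b c -> [set a; c] \in D ->
  add_edges e E'' c b.
Proof.
move=> u_ab h_bc acD; rewrite add_edges_sym; move: h_bc.
rewrite /add_edges /= => /orP[-> // | /andP[-> bcE]].
have b_ba : is_bridge e b a by rewrite is_bridge_sym; apply: chordal_bridge.
have /andP[acC acE] : ([set a; c] \notin C) && ([set a; c] \in E) by rewrite -in_setD.
have n_ac : ~~ cross a c by apply: contra acC => c_ac; rewrite mem_cross_edges acE.
by rewrite /E'' inE /D inE bcE andbT mem_cross_edges bcE (cross_bridge _ b_ba) n_ac orbT.
Qed.

Lemma cover_kept_edge x y : [set x; y] \in D ->
  exists z, add_edges e E'' x z && add_edges e E'' y z.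
Proof.
move=> xyD; have xyE : [set x; y] \in E by move: xyD; rewrite inE => /andP[].
have := min_completion_supports E_min xyE.
case/existsP=> a /existsP[b /existsP[c /and4P[u_ab h_ac h_bc /orP[] /eqP xy_]]].
  apply: (pair_covered (c := b) _ _ xy_).
    by rewrite /add_edges /= (andP u_ab).1.
  by apply: (kept_triangle_side u_ab h_bc); rewrite -xy_.
rewrite untriangled_sym in u_ab; last exact: e_sym.
apply: (pair_covered (c := a) _ _ xy_).
  by rewrite /add_edges /= (andP u_ab).1.
by apply: (kept_triangle_side u_ab h_ac); rewrite -xy_.
Qed.

Lemma cover_repair_edge x y : [set x; y] \in repairs ->
  exists z, add_edges e E'' x z && add_edges e E'' y z.
Proof.
case/imsetP=> b bU; have [a [c [w [_ b_ac b_aw _ ->]]]] := uncovered_repair bU.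
move=> xy_; apply: (pair_covered (c := a) _ _ xy_);
  by rewrite /add_edges /= e_sym bridge_edge.
Qed.

Lemma E''_completion : completion_set e E''.
Proof.
split=> [f | x y].
  rewrite inE => /orP[fD | /repairs_spec[u [v [u_v n_uv -> _]]]]; last by exists u, v.
  by case: E_min => [[non_edges _] _]; apply: non_edges; move: fD; rewrite inE => /andP[].
rewrite {1}/add_edges /= => /orP[/cover_graph_edge // | /andP[_]].
by rewrite inE => /orP[/cover_kept_edge | /cover_repair_edge].
Qed.

Lemma cross_edges_E'' : cross_edges E'' Ti Tj = set0.
Proof.
apply/setP => f; rewrite in_set0; apply/negP => fX; have := fX; rewrite inE => /andP[].
rewrite inE => /orP[fD _ | /repairs_spec[u [v [_ _ f_ same]]] _].
  have [x [y [f_ xI yJ]]] := cross_edges_pair fX.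
  move: fD; rewrite f_ inE mem_cross_edges => /andP[/negP xyC xyE]; apply: xyC.
  by rewrite xyE /cross xI yJ.
by move: fX; rewrite f_ mem_cross_edges (negbTE (not_cross_tree same)) andbF.
Qed.

End Exchange.
End Bridges.

Unset Implicit Arguments.

Theorem lemma12 (T : finType) (e : rel T) (E' : {set {set T}}) (Ti Tj : {set T}) :
  simple_graph e -> connected_graph e -> chordal e -> 3 <= #|T| ->
  min_completion_set e E' ->
  is_tree_of e Ti -> is_tree_of e Tj -> Ti != Tj ->
  3 <= #|Ti| -> 3 <= #|Tj| ->
  0 < #|cross_edges E' Ti Tj| ->
  exists (E'' F : {set {set T}}),
    [/\ min_completion_set e E'',
        #|cross_edges E'' Ti Tj| = 0,
        E'' = (E' :\: cross_edges E' Ti Tj) :|: F &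
        forall f, f \in F -> exists u v : T,
          [/\ u != v, ~~ e u v, f = [set u; v] &
              ((u \in Ti) && (v \in Ti)) || ((u \in Tj) && (v \in Tj))]].
Proof.
(* The hypothesis [3 <= #|T|] is implied by [3 <= #|Ti|]. *)
move=> [e_sym e_irr] e_conn e_chordal _ E'_min tI tJ Ti_Tj Ti_big Tj_big C_gt0.
exists (E'' e E' Ti Tj), (repairs e E' Ti Tj); split=> //.
- split; first exact: E''_completion.
  move=> F F_compl; apply: leq_trans (E'_min.2 F F_compl).
  exact: card_E'' C_gt0.
- by rewrite (cross_edges_E'' e_sym e_irr e_conn E'_min) ?cards0.
- exact: repairs_spec.
Qed.
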